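(* Let $k\ge2$, let $n_1,\dots,n_m$ be positive reals and $n=n_1+\cdots+n_m$. Let $F_k(x)=\left(\frac nk x\right)^{\frac1{k-1}}$ for $x\in[0,\frac kn]$ and $F_k(x)=1$ for $x>\frac kn$. In the $m$-group auction described in the context, suppose each of the $k-1$ disadvantaged bidders, independently, bids $n_i b_i$ on group $i$, where $(b_1,\dots,b_m)$ is drawn from an $m$-dimensional distribution such that each $b_i$ has cumulative distribution function $F_k$ and $n_1b_1+\cdots+n_mb_m=1$. Then the maximum over strategies of the adversary ${\mathcal A}$ of the expected number of objects won by ${\mathcal A}$ equals $n/k$.
   Context: $m$-group auction model: objects are divided into $m$ groups, group $i$ containing $n_i$ objects ($n_i$ a positive real, interpreted as the value of the group); the total number of objects is $n=\sum_i n_i$. There are $k$ bidders: an adversary ${\mathcal A}$ and $k-1$ disadvantaged bidders; each has budget $1$ and submits simultaneously nonnegative bids for the $m$ groups with total at most $1$. The highest bidder on a group obtains all $n_i$ objects in it; if $j$ bidders tie for the highest bid, each wins the group with probability $1/j$. ${\mathcal A}$ knows the disadvantaged bidders' bidding algorithm but not their realized bids; his bids are independent of theirs. *)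

From HB Require Import structures.
From mathcomp Require Import all_boot all_order all_algebra.
From mathcomp Require Import all_classical all_reals all_analysis.
Set Implicit Arguments. Unset Strict Implicit. Unset Printing Implicit Defensive.
Import Order.TTheory GRing.Theory Num.Theory.
Local Open Scope classical_set_scope.
Local Open Scope ring_scope.

Definition Fk (R : realType) (n : R) (k : nat) (x : R) : R :=
  if x < 0 then 0
  else if x <= k%:R / n then (n / k%:R * x) `^ (1 / (k%:R - 1))
  else 1.

(* Rectangles form a pi-system generating the joint sigma-algebras. *)
Definition indep_vecs (R : realType) (d : measure_display) (T : measurableType d)
  (P : probability T R) (I : finType) (m : nat) (X : I -> T -> 'I_m -> R) : Prop :=
  forall E : I -> 'I_m -> set R, (forall j i, measurable (E j i)) ->
    fine (P [set w | forall j i, E j i (X j w i)]) =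
    \prod_(j : I) fine (P [set w | forall i, E j i (X j w i)]).

(* Family of all k bidders: None = adversary, Some j = j-th disadvantaged bidder. *)
Definition all_bidders (R : realType) (T : Type) (m k : nat)
  (A : T -> 'I_m -> R) (B : 'I_k.-1 -> T -> 'I_m -> R) :
  option 'I_k.-1 -> T -> 'I_m -> R :=
  fun o => match o with None => A | Some j => B j end.

Definition adv_strategy (R : realType) (d : measure_display) (T : measurableType d)
  (m : nat) (A : T -> 'I_m -> R) : Prop :=
  (forall i, measurable_fun setT (fun w => A w i)) /\
  (forall w, (forall i, 0 <= A w i) /\ \sum_(i < m) A w i <= 1).

(* If some disadvantaged bid is strictly higher, he loses;
   otherwise he wins with probability 1/(1 + #ties). *)
Definition adv_win (R : realType) (T : Type) (m k : nat) (nv : 'I_m -> R)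
  (A : T -> 'I_m -> R) (B : 'I_k.-1 -> T -> 'I_m -> R) (i : 'I_m) (w : T) : R :=
  if [exists j, A w i < nv i * B j w i] then 0
  else (1 + #|[set j | nv i * B j w i == A w i]|%:R)^-1.

Definition adv_gain (R : realType) (T : Type) (m k : nat) (nv : 'I_m -> R)
  (A : T -> 'I_m -> R) (B : 'I_k.-1 -> T -> 'I_m -> R) (w : T) : R :=
  \sum_(i < m) nv i * adv_win nv A B i w.

Definition adv_expected (R : realType) (d : measure_display) (T : measurableType d)
  (P : probability T R) (m k : nat) (nv : 'I_m -> R)
  (A : T -> 'I_m -> R) (B : 'I_k.-1 -> T -> 'I_m -> R) : \bar R :=
  (\int[P]_w (adv_gain nv A B w)%:E)%E.

(* Suppose the adversary bids a on group i.  He can only win the group if every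
   disadvantaged bid n_i b_(j,i) is at most a; by independence this happens with
   probability F_k(a / n_i)^(k-1) <= (n/k) a / n_i, so group i contributes at
   most (n/k) a to his expected gain, and the budget constraint gives n/k.
   Independence is only available for events about the bids, so the random
   threshold a is first rounded up to the grid of mesh 1/M, at a cost of
   (n/k) m / M which vanishes as M grows.  Conversely, the deterministic bid
   n_i / n wins group i as soon as all b_(j,i) lie below some y < 1/n, which has
   probability F_k(y)^(k-1) = (n/k) y. *)

Set Warnings "-notation-overridden,-ambiguous-paths,-notation-incompatible-prefix".
From HB Require Import structures.
From mathcomp Require Import all_boot all_order all_algebra.
From mathcomp Require Import all_classical all_reals all_analysis.
From mathcomp Require Import measurable_realfun ring.
Set Implicit Arguments. Unset Strict Implicit. Unset Printing Implicit Defensive.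
Import Order.TTheory GRing.Theory Num.Theory.
Local Open Scope classical_set_scope.
Local Open Scope ring_scope.

Lemma big_option (R : Type) (idx : R) (op : Monoid.com_law idx) (I : finType)
    (F : option I -> R) :
  \big[op/idx]_(o : option I) F o = op (F None) (\big[op/idx]_(j : I) F (Some j)).
Proof.
rewrite (bigD1 None) //=; congr (op _ _).
rewrite (reindex_omap Some id) //=; first by apply: eq_bigl => j; rewrite eqxx.
by case.
Qed.

Lemma lee_add_divn (R : realType) (x : \bar R) (y e : R) : 0 <= e ->
  (forall M : nat, (0 < M)%N -> (x <= (y + e / M%:R)%:E)%E) -> (x <= y%:E)%E.
Proof.
move=> e0; case: x => [x| |] xle; last by rewrite leNye.
- rewrite lee_fin; apply/ler_addgt0Pr => eps eps0.
  have := archi_boundP (divr_ge0 e0 (ltW eps0)).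
  set M := Num.bound (e / eps) => eM.
  apply: (le_trans (xle M.+1 isT : x <= _)); rewrite lerD2l ler_pdivrMr ?ltr0n //.
  rewrite ltr_pdivrMr // in eM; rewrite mulrC; apply: (le_trans (ltW eM)).
  by rewrite ler_wpM2r ?ler_nat // ltW.
- by have := xle 1%N isT; rewrite leye_eq.
Qed.

Lemma lee_sub_divn (R : realType) (x : \bar R) (y e : R) : 0 <= e ->
  (forall M : nat, (0 < M)%N -> ((y - e / M%:R)%:E <= x)%E) -> (y%:E <= x)%E.
Proof.
move=> e0 xge; rewrite -leeN2 -EFinN; apply: lee_add_divn e0 _ => M M0.
by have := xge M M0; rewrite -leeN2 -EFinN opprB addrC.
Qed.

Lemma measurable_preimageT d d' (T : measurableType d) (U : measurableType d')
    (f : T -> U) (Y : set U) :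
  measurable_fun setT f -> measurable Y -> measurable (f @^-1` Y).
Proof. by move=> mf mY; rewrite -[_ @^-1` _]setTI; exact: mf. Qed.

(* Unlike [ge0_le_integral], no measurability is required: the integral of a
   nonnegative function is the supremum of the integrals of its simple minorants. *)
Lemma ge0_le_integralT d (T : measurableType d) (R : realType)
    (mu : {measure set T -> \bar R}) (f g : T -> \bar R) :
  (forall x, (0 <= f x)%E) -> (forall x, (f x <= g x)%E) ->
  (\int[mu]_x f x <= \int[mu]_x g x)%E.
Proof.
move=> f0 fg; have g0 x : (0 <= g x)%E by exact: le_trans (f0 x) (fg x).
rewrite !ge0_integralTE //; apply: ereal_sup_le => _ [h hf <-].
by exists h => //= x; exact: le_trans (hf x) (fg x).
Qed.

Lemma integral_sum_indic d (T : measurableType d) (R : realType)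
    (P : probability T R) (I : finType) (c : I -> R) (E : I -> set T) :
  (forall p, 0 <= c p) -> (forall p, measurable (E p)) ->
  (\int[P]_w (\sum_p c p * \1_(E p) w)%:E = (\sum_p c p * fine (P (E p)))%:E)%E.
Proof.
move=> c0 mE; under eq_integral do rewrite -sumEFin.
rewrite ge0_integral_sum //; last by move=> p x _; rewrite lee_fin mulr_ge0.
  rewrite -sumEFin; apply: eq_bigr => p _.
  rewrite (@integralZl_indic _ _ _ _ _ _ (fun=> E p)) //; last first.
    by move=> /lt_geF; rewrite c0.
  by rewrite integral_indic // setIT EFinM fineK // fin_num_measure.
by move=> p; apply/measurable_EFinP/measurable_funM.
Qed.

Lemma Fk_expr (R : realType) (N : R) (k : nat) (t : R) :
  0 < N -> (2 <= k)%N -> 0 <= t -> t <= k%:R / N ->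
  Fk N k t ^+ k.-1 = N / k%:R * t.
Proof.
move=> N0 k2 t0 tk; rewrite /Fk ltNge t0 tk /=.
have Nt0 : 0 <= N / k%:R * t by rewrite mulr_ge0 // divr_ge0 // ltW.
move: Nt0; case: k k2 {tk} => // k k2 Nt0 /=.
have -> : k.+1%:R - 1 = k%:R :> R by rewrite -natr1 addrK.
rewrite -powR_mulrn ?powR_ge0 // -powRrM mul1r mulVf ?powRr1 //.
by rewrite pnatr_eq0 -lt0n.
Qed.

Lemma Fk_expr_le (R : realType) (N : R) (k : nat) (t : R) :
  0 < N -> (2 <= k)%N -> 0 <= t -> Fk N k t ^+ k.-1 <= N / k%:R * t.
Proof.
move=> N0 k2 t0; have [tk|tk] := leP t (k%:R / N); first by rewrite Fk_expr.
have k0 : 0 < k%:R :> R by rewrite ltr0n (leq_trans _ k2).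
rewrite /Fk ltNge t0 (leNgt t) tk /= expr1n.
by rewrite mulrAC ler_pdivlMr // mul1r (mulrC N) -ler_pdivrMr // ltW.
Qed.

Definition grid_cell {R : realType} (M l : nat) : set R :=
  [set` `](l%:R - 1) / M%:R, l%:R / M%:R]].

Lemma grid_cell_exists (R : realType) (a : R) (M : nat) :
  (0 < M)%N -> 0 <= a -> a <= 1 -> exists l : 'I_M.+1, grid_cell M l a.
Proof.
move=> M0 a0 a1; have M0r : 0 < M%:R :> R by rewrite ltr0n.
have [|l al lmin] := ex_minnP (_ : exists l : nat, a <= l%:R / M%:R).
  by exists M; rewrite mulfV ?gt_eqF.
have lM : (l < M.+1)%N by rewrite ltnS lmin // mulfV ?gt_eqF.
exists (Ordinal lM); rewrite /grid_cell /= in_itv /= al andbT.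
case: l al lmin {lM} => [|l] al lmin.
  by rewrite sub0r mulNr mul1r (lt_le_trans _ a0) // oppr_lt0 invr_gt0.
by rewrite -natr1 addrK ltNge; apply/negP => /lmin; rewrite ltnn.
Qed.

Lemma grid_cell_unique (R : realType) (a : R) (M l l' : nat) : (0 < M)%N ->
  grid_cell M l a -> grid_cell M l' a -> l = l'.
Proof.
move=> M0; rewrite /grid_cell /= !in_itv /=.
have le_cells (p q : nat) :
    (p%:R - 1) / M%:R < a -> a <= q%:R / M%:R -> (p <= q)%N.
  move=> pa aq; have := lt_le_trans pa aq.
  by rewrite ltr_pM2r ?invr_gt0 ?ltr0n // ltrBlDr natr1 ltr_nat ltnS.
by move=> /andP[? ?] /andP[? ?]; apply/eqP; rewrite eqn_leq !le_cells.
Qed.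

Lemma sum_grid_cell_le (R : realType) (a : R) (M : nat) : (0 < M)%N -> 0 <= a ->
  \sum_(l < M.+1) l%:R / M%:R * \1_(grid_cell M l) a <= a + 1 / M%:R.
Proof.
move=> M0 a0; have [[l al]|none] := pselect (exists l : 'I_M.+1, grid_cell M l a).
  rewrite (bigD1 l) //= big1 => [|l' l'l]; last first.
    have [al'|al'] := pselect (grid_cell M l' a); last first.
      by rewrite indicE memNset ?mulr0.
    by move: l'l; rewrite (ord_inj (grid_cell_unique M0 al' al)) eqxx.
  rewrite indicE mem_set // mulr1 addr0.
  move: al; rewrite /grid_cell /= in_itv /= => /andP[la _].
  by rewrite -lerBlDr -mulrBl ltW.
rewrite big1 ?addr_ge0 ?divr_ge0 ?ler0n // => l _.
by rewrite indicE memNset ?mulr0 // => al; apply: none; exists l.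
Qed.

Section independence.
Variables (R : realType) (d : measure_display) (T : measurableType d).
Variables (P : probability T R) (m k : nat).

Lemma indep_vecs_coord (I : finType) (X : I -> T -> 'I_m -> R) (i : 'I_m)
    (S : I -> set R) :
  (forall j, measurable (S j)) -> indep_vecs P X ->
  fine (P [set w | forall j, S j (X j w i)]) =
  \prod_j fine (P [set w | S j (X j w i)]).
Proof.
move=> mS indX; pose E j i' := if i' == i then S j else setT.
have coordE j (x : 'I_m -> R) : (forall i', E j i' (x i')) = S j (x i).
  apply/propext; split=> [/(_ i)|Sx i']; first by rewrite /E eqxx.
  by rewrite /E; case: eqP => [->|].
have mE j i' : measurable (E j i') by rewrite /E; case: (i' == i).
have := indX E mE.
have -> : [set w | forall j i', E j i' (X j w i')] =
          [set w | forall j, S j (X j w i)].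
  by apply/seteqP; split=> w /= h j; [rewrite -coordE | rewrite coordE].
move=> ->; apply: eq_bigr => j _; congr (fine (P _)).
by apply/seteqP; split=> w /=; rewrite coordE.
Qed.

Lemma indep_all_bidders_coord (A : T -> 'I_m -> R)
    (B : 'I_k.-1 -> T -> 'I_m -> R) (i : 'I_m) (S : set R) (t : R) :
  measurable S -> indep_vecs P (all_bidders A B) ->
  fine (P [set w | S (A w i) /\ forall j, B j w i <= t]) =
  fine (P [set w | S (A w i)]) * \prod_j fine (P [set w | B j w i <= t]).
Proof.
move=> mS indAB.
pose S' (o : option 'I_k.-1) := if o is Some _ then [set x | x <= t] else S.
have mS' o : measurable (S' o) by case: o => [j|] //=; rewrite -set_itvNyc.
have := indep_vecs_coord i mS' indAB; rewrite big_option /=.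
have -> // : [set w | forall o, S' o (all_bidders A B o w i)] =
             [set w | S (A w i) /\ forall j, B j w i <= t].
apply/seteqP; split=> [w /= h|w [SA Bt] [j|] //=].
by split=> [|j]; [exact: h None | exact: h (Some j)].
Qed.

Lemma indep_all_bidders_cst (a : 'I_m -> R) (B : 'I_k.-1 -> T -> 'I_m -> R) :
  indep_vecs P B -> indep_vecs P (all_bidders (fun=> a) B).
Proof.
move=> indB E mE; rewrite big_option /=.
have [Ea|Ea] := pselect (forall i, E None i (a i)).
  have -> : [set w | forall o i, E o i (all_bidders (fun=> a) B o w i)] =
            [set w | forall j i, E (Some j) i (B j w i)].
    by apply/seteqP; split=> [w /= h j|w /= h [j|]] //; exact: h (Some j).
  have -> : [set w : T | forall i, E None i (a i)] = setT by apply/seteqP; split.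
  by rewrite probability_setT mul1r; exact: (indB (fun j => E (Some j))).
have -> : [set w | forall o i, E o i (all_bidders (fun=> a) B o w i)] = set0.
  by apply/seteqP; split=> // w /= /(_ None).
have -> : [set w : T | forall i, E None i (a i)] = set0 by apply/seteqP; split.
by rewrite measure0 mul0r.
Qed.
End independence.

Lemma prob_sum_eq1_gt0n (R : realType) (d : measure_display)
    (T : measurableType d) (P : probability T R) (m : nat) (f : T -> 'I_m -> R) :
  P [set w | \sum_(i < m) f w i = 1] = 1%E -> (0 < m)%N.
Proof.
case: m f => // f; have -> : [set w | \sum_(i < 0) f w i = 1] = set0.
  apply/seteqP; split=> // w /=.
  by rewrite big_ord0 => /esym/eqP; rewrite oner_eq0.
by rewrite measure0 => /esym/eqP; rewrite onee_eq0.
Qed.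

Section auction.
Variables (R : realType) (d : measure_display) (T : measurableType d).
Variables (P : probability T R) (m k : nat) (nv : 'I_m -> R).
Variable B : 'I_k.-1 -> T -> 'I_m -> R.
Local Notation N := (\sum_(l < m) nv l).
Hypothesis k_ge2 : (2 <= k)%N.
Hypothesis nv_gt0 : forall i, 0 < nv i.
Hypothesis N_gt0 : 0 < N.
Hypothesis mB : forall j i, measurable_fun setT (fun w => B j w i).
Hypothesis B_cdf : forall j i x, P [set w | B j w i <= x] = (Fk N k x)%:E.

Let k_gt0 : 0 < k%:R :> R. Proof. by rewrite ltr0n (leq_trans _ k_ge2). Qed.

Let nv_ge0 i : 0 <= nv i. Proof. exact: ltW. Qed.

Lemma adv_win_ge0 (A : T -> 'I_m -> R) i w : 0 <= adv_win nv A B i w.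
Proof. by rewrite /adv_win; case: ifP => // _; rewrite invr_ge0 addr_ge0. Qed.

Lemma adv_gain_ge0 (A : T -> 'I_m -> R) w : 0 <= adv_gain nv A B w.
Proof. by apply: sumr_ge0 => i _; rewrite mulr_ge0 ?adv_win_ge0. Qed.

Lemma prob_adv_bid_bids_le (A : T -> 'I_m -> R) i (S : set R) t :
  measurable S -> indep_vecs P (all_bidders A B) ->
  fine (P [set w | S (A w i) /\ forall j, B j w i <= t]) =
  fine (P [set w | S (A w i)]) * Fk N k t ^+ k.-1.
Proof.
move=> mS indAB; rewrite (indep_all_bidders_coord i t mS indAB).
by under eq_bigr do rewrite B_cdf /=; rewrite prodr_const card_ord.
Qed.

Lemma measurable_bids_le i t : measurable [set w | forall j, B j w i <= t].
Proof.
rewrite (_ : [set w | _] = \bigcap_j (fun w => B j w i) @^-1` `]-oo, t]).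
  by apply: fin_bigcap_measurable => // j _; exact: measurable_preimageT.
by apply/seteqP; split=> w /= Bw j; rewrite ?in_itv /=; [move=> _|]; exact: Bw.
Qed.

Lemma prob_bids_le i t : indep_vecs P B ->
  fine (P [set w | forall j, B j w i <= t]) = Fk N k t ^+ k.-1.
Proof.
move=> indB; rewrite (indep_vecs_coord i (S := fun=> [set x | x <= t])) //.
  by under eq_bigr do rewrite B_cdf /=; rewrite prodr_const card_ord.
by move=> j; rewrite -set_itvNyc.
Qed.

Section upper_bound.
Variables (A : T -> 'I_m -> R) (M : nat).
Hypothesis A_strategy : adv_strategy A.
Hypothesis A_indep : indep_vecs P (all_bidders A B).
Hypothesis M_gt0 : (0 < M)%N.

Let bid_cell (p : 'I_m * 'I_M.+1) := [set w | grid_cell M p.2 (A w p.1)].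
Let win_cell (p : 'I_m * 'I_M.+1) := [set w | grid_cell M p.2 (A w p.1) /\
  forall j, B j w p.1 <= p.2%:R / M%:R / nv p.1].

Let A_ge0 w i : 0 <= A w i. Proof. by case: (A_strategy.2 w). Qed.

Let A_le1 w i : A w i <= 1.
Proof.
case: (A_strategy.2 w) => A0 A1; apply: le_trans A1.
by rewrite (bigD1 i) //= lerDl sumr_ge0.
Qed.

Let measurable_bid_cell p : measurable (bid_cell p).
Proof.
by apply: measurable_preimageT; [exact: A_strategy.1 | exact: measurable_itv].
Qed.

Let measurable_win_cell p : measurable (win_cell p).
Proof. exact: measurableI (measurable_bid_cell p) (measurable_bids_le _ _). Qed.

Lemma adv_win_le_cells i w :
  adv_win nv A B i w <= \sum_(l < M.+1) \1_(win_cell (i, l)) w.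
Proof.
rewrite /adv_win; case: ifPn => [_|]; first by rewrite sumr_ge0.
rewrite negb_exists => /forallP Ble.
have [l Al] := grid_cell_exists M_gt0 (A_ge0 w i) (A_le1 w i).
rewrite (bigD1 l) //= indicE mem_set; last first.
  split=> // j; rewrite ler_pdivlMr // mulrC.
  by apply: le_trans (_ : A w i <= _); [rewrite leNgt Ble | case/andP: Al].
apply: (@le_trans _ _ 1); last by rewrite lerDl sumr_ge0.
by rewrite invf_le1 ?lerDl // ltr_wpDr.
Qed.

Lemma prob_win_cell_le p :
  nv p.1 * fine (P (win_cell p)) <=
  N / k%:R * (p.2%:R / M%:R * fine (P (bid_cell p))).
Proof.
set t := p.2%:R / M%:R / nv p.1.
have t0 : 0 <= t by rewrite !divr_ge0 ?ler0n ?ltW.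
have P0 : 0 <= fine (P (bid_cell p)) by rewrite fine_ge0.
have -> : N / k%:R * (p.2%:R / M%:R * fine (P (bid_cell p))) =
          nv p.1 * (fine (P (bid_cell p)) * (N / k%:R * t)).
  rewrite /t; field.
  by rewrite (gt_eqF (nv_gt0 _)) !pnatr_eq0 -!lt0n M_gt0 (leq_trans _ k_ge2).
rewrite /win_cell (prob_adv_bid_bids_le _ _ (measurable_itv _) A_indep).
by rewrite ler_pM2l //; apply: ler_wpM2l => //; exact: Fk_expr_le.
Qed.

Lemma sum_bid_cells_le :
  \sum_(p : 'I_m * 'I_M.+1) p.2%:R / M%:R * fine (P (bid_cell p)) <=
  1 + m%:R / M%:R.
Proof.
have c0 (p : 'I_m * 'I_M.+1) : 0 <= p.2%:R / M%:R :> R by rewrite divr_ge0.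
rewrite -lee_fin -(integral_sum_indic P c0 measurable_bid_cell).
apply: le_trans (_ : _ <= \int[P]_w (1 + m%:R / M%:R)%:E)%E _; last first.
  by rewrite integral_cst //= probability_setT mule1.
apply: ge0_le_integralT => w; rewrite lee_fin.
  by rewrite sumr_ge0 // => p _; rewrite mulr_ge0 ?divr_ge0.
have -> : \sum_(p : 'I_m * 'I_M.+1) p.2%:R / M%:R * \1_(bid_cell p) w =
    \sum_(i < m) \sum_(l < M.+1) l%:R / M%:R * \1_(grid_cell M l) (A w i) :> R.
  by rewrite pair_bigA; apply: eq_bigr => -[i l].
apply: le_trans (_ : _ <= \sum_(i < m) (A w i + 1 / M%:R)) _.
  by apply: ler_sum => i _; exact: sum_grid_cell_le.
rewrite big_split /= sumr_const card_ord lerD //; first by case: (A_strategy.2 w).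
by rewrite -mulrnAl.
Qed.

Lemma adv_expected_le_grid :
  (adv_expected P nv A B <= (N / k%:R * (1 + m%:R / M%:R))%:E)%E.
Proof.
apply: le_trans (_ : _ <= \int[P]_w (\sum_p nv p.1 * \1_(win_cell p) w)%:E)%E _.
  apply: ge0_le_integralT => w; rewrite lee_fin ?adv_gain_ge0 //.
  rewrite -(pair_bigA _ (fun i (l : 'I_M.+1) => nv i * \1_(win_cell (i, l)) w)).
  apply: ler_sum => i _; rewrite -mulr_sumr ler_pM2l //.
  exact: adv_win_le_cells.
rewrite (integral_sum_indic P (fun p => ltW (nv_gt0 p.1)) measurable_win_cell).
have Nk0 : 0 <= N / k%:R by rewrite divr_ge0 ?ltW.
rewrite lee_fin; apply: le_trans (ler_wpM2l Nk0 sum_bid_cells_le).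
by rewrite mulr_sumr; apply: ler_sum => p _; exact: prob_win_cell_le.
Qed.

End upper_bound.

Lemma adv_expected_le (A : T -> 'I_m -> R) :
  adv_strategy A -> indep_vecs P (all_bidders A B) ->
  (adv_expected P nv A B <= (N / k%:R)%:E)%E.
Proof.
move=> A_strategy A_indep.
apply: (@lee_add_divn _ _ _ (N / k%:R * m%:R)) => [|M M_gt0].
  by rewrite mulr_ge0 // divr_ge0 // ltW.
rewrite (_ : _ + _ = N / k%:R * (1 + m%:R / M%:R)); last first.
  by rewrite mulrDr mulr1 mulrA.
exact: adv_expected_le_grid.
Qed.

Definition proportional_bid (i : 'I_m) : R := nv i / N.

Lemma proportional_bid_strategy : adv_strategy (fun _ : T => proportional_bid).
Proof.
split=> [i|w]; first exact: measurable_cst.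
split=> [i|]; first by rewrite divr_ge0 ?ltW.
by rewrite -mulr_suml mulfV ?gt_eqF.
Qed.

Lemma adv_win_proportional i w : (forall j, B j w i < N^-1) ->
  adv_win nv (fun=> proportional_bid) B i w = 1.
Proof.
move=> B_lt; have below j : nv i * B j w i < proportional_bid i.
  by rewrite ltr_pM2l // B_lt.
rewrite /adv_win ifF; last first.
  by apply/negbTE; rewrite negb_exists; apply/forallP => j; rewrite -leNgt ltW.
rewrite eq_card0 ?addr0 ?invr1 // => j.
by apply/negbTE/negP; rewrite in_setE /= lt_eqF.
Qed.

Lemma adv_expected_proportional_ge_grid (M : nat) :
  indep_vecs P B -> (0 < M)%N ->
  ((N / k%:R - N / k%:R / M%:R)%:E <=
    adv_expected P nv (fun=> proportional_bid) B)%E.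
Proof.
move=> B_indep M_gt0; have M0 : 0 < M%:R :> R by rewrite ltr0n.
pose y := (1 - 1 / M%:R) / N.
have y_ge0 : 0 <= y.
  by apply: divr_ge0; [rewrite subr_ge0 ler_pdivrMr // mul1r ler1n | exact: ltW].
have y_lt : y < N^-1.
  by rewrite -[ltRHS]mul1r ltr_pM2r ?invr_gt0 // gtrBl divr_gt0.
have y_le : y <= k%:R / N.
  by rewrite (le_trans (ltW y_lt)) // ler_pdivlMr // mulVf ?gt_eqF // ler1n ltnW.
pose V (i : 'I_m) := [set w | forall j, B j w i <= y].
have PV i : fine (P (V i)) = N / k%:R * y.
  by rewrite /V (prob_bids_le i y B_indep) (Fk_expr N_gt0 k_ge2 y_ge0 y_le).
apply: le_trans (_ : _ <= \int[P]_w (\sum_i nv i * \1_(V i) w)%:E)%E _.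
  rewrite (integral_sum_indic P (fun i => ltW (nv_gt0 i)) (measurable_bids_le ^~ y)) lee_fin.
  rewrite [leRHS](eq_bigr (fun i => nv i * (N / k%:R * y))) => [|i _]; last first.
    by rewrite PV.
  rewrite -mulr_suml [leRHS](_ : _ = N / k%:R - N / k%:R / M%:R) // /y.
  by field; rewrite (gt_eqF N_gt0) (gt_eqF M0) (gt_eqF k_gt0).
apply: ge0_le_integralT => w; rewrite lee_fin.
  by apply: sumr_ge0 => i _; rewrite mulr_ge0 ?nv_ge0 ?indicE.
apply: ler_sum => i _; rewrite ler_pM2l // indicE.
have [Vw|] := boolP (w \in V i); last by move=> _; exact: adv_win_ge0.
rewrite adv_win_proportional // => j.
by move: Vw; rewrite inE => /(_ j) /le_lt_trans; apply.
Qed.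

Lemma adv_expected_proportional : indep_vecs P B ->
  adv_expected P nv (fun=> proportional_bid) B = (N / k%:R)%:E.
Proof.
move=> B_indep; apply/le_anti/andP; split.
  exact: adv_expected_le proportional_bid_strategy (indep_all_bidders_cst _ B_indep).
apply: (@lee_sub_divn _ _ _ (N / k%:R)); first by rewrite divr_ge0 ?ltW.
by move=> M; exact: adv_expected_proportional_ge_grid.
Qed.

End auction.

Theorem lemma5p2 (R : realType) (d : measure_display) (T : measurableType d)
  (P : probability T R) (m k : nat) (nv : 'I_m -> R)
  (B : 'I_k.-1 -> T -> 'I_m -> R) :
  (2 <= k)%N ->
  (forall i, 0 < nv i) ->
  (forall j i, measurable_fun setT (fun w => B j w i)) ->
  (forall j i (x : R),
      P [set w | B j w i <= x] = (Fk (\sum_(l < m) nv l) k x)%:E) ->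
  (forall j, P [set w | \sum_(i < m) nv i * B j w i = 1] = 1%E) ->
  indep_vecs P B ->
  (forall A : T -> 'I_m -> R, adv_strategy A ->
     indep_vecs P (all_bidders A B) ->
     (adv_expected P nv A B <= ((\sum_(l < m) nv l) / k%:R)%:E)%E) /\
  (exists A : T -> 'I_m -> R, adv_strategy A /\
     indep_vecs P (all_bidders A B) /\
     adv_expected P nv A B = ((\sum_(l < m) nv l) / k%:R)%:E).
Proof.
move=> k_ge2 nv_gt0 mB B_cdf B_budget B_indep.
have m_gt0 : (0 < m)%N.
  have k1_gt0 : (0 < k.-1)%N by rewrite -ltnS prednK // ltnW.
  exact: prob_sum_eq1_gt0n (B_budget (Ordinal k1_gt0)).
have N_gt0 : 0 < \sum_(l < m) nv l.
  by rewrite (bigD1 (Ordinal m_gt0)) //= ltr_pwDl ?sumr_ge0 // => l _; rewrite ltW.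
split=> [A|]; first exact: adv_expected_le.
exists (fun=> proportional_bid nv); split; first exact: proportional_bid_strategy.
split; first exact: indep_all_bidders_cst.
exact: adv_expected_proportional.
Qed.
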